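(* Let $\mathbb K$ be a field with $\operatorname{char}(\mathbb K)=0$, $n\ge2$, and $\mathcal G_n$, $z_e$ as in the context. If $f\in A_{\mathbb K}(\mathcal G_n)$ satisfies $f(z_e)\neq0$, then $\operatorname{supp}(f)=\{x\in\mathcal G_n:f(x)\neq0\}$ has nonempty interior; thus $f\notin S_{\mathbb K}(\mathcal G_n)$.
   Context: Let $X=\{\mathbf 0,\mathbf 1\}$, $X^*$ the finite words (with empty word $\varnothing$), $X^\omega$ the infinite words, $C(\eta)=\{\eta w:w\in X^\omega\}$, $\mathbf 1^\infty$ the infinite word of ones. Fix $n\ge2$, a primitive polynomial $f_n$ of degree $n$ over $\mathbb F_2$ with root $\alpha$, and $\operatorname{Tr}(\beta)=\beta+\beta^2+\dots+\beta^{2^{n-1}}\in\mathbb F_2$. $\mathfrak G_n$ is the group of automorphisms of the binary rooted tree $X^*$ generated by $a$ ($a\cdot(\mathbf 0w)=\mathbf 1w$, $a\cdot(\mathbf 1w)=\mathbf 0w$) and $\iota_n(\beta)$, $\beta\in\mathbb F_{2^n}$, where $\iota_n(\beta)\cdot(\mathbf 0w)=\mathbf 0(a^{\operatorname{Tr}(\beta)}\cdot w)$, $\iota_n(\beta)\cdot(\mathbf 1w)=\mathbf 1(\iota_n(\alpha\beta)\cdot w)$; restrictions $g|_x$ are given by $g\cdot(xw)=(g\cdot x)(g|_x\cdot w)$; $e$ is the identity. $\mathcal G_n$ is the groupoid of germs of the action of the inverse semigroup $\{(\eta,g,\mu)\}\cup\{0\}$ on $X^\omega$ with $(\eta,g,\mu):C(\mu)\to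 C(\eta)$, $\mu w\mapsto\eta(g\cdot w)$; germs $[(\eta,g,\mu),w]$, $w\in C(\mu)$, with $[(\eta,g,\mu),w]=[(\eta',g',\mu'),w']$ iff $w=w'$ and some finite prefix $\nu=\mu\epsilon=\mu'\epsilon'$ of $w$ satisfies $\eta(g\cdot\epsilon)=\eta'(g'\cdot\epsilon')$ and $g|_\epsilon=g'|_{\epsilon'}$; basic open bisections $\{[s,w]:w\in U\}$. $z_e=[(\varnothing,e,\varnothing),\mathbf 1^\infty]$. $A_{\mathbb K}(\mathcal G_n)$ is the Steinberg algebra (the $\mathbb K$-span of characteristic functions of compact open bisections), and $S_{\mathbb K}(\mathcal G_n)$ is its ideal of singular functions: $f=\sum_i c_i1_{S_i}$ with each $S_i$ relatively closed in an open bisection and of empty interior (equivalently, $\operatorname{supp}(f)$ has empty interior). *)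

From mathcomp Require Import all_boot all_order all_algebra.
From Stdlib Require List.
Set Implicit Arguments. Unset Strict Implicit. Unset Printing Implicit Defensive.
Import GRing.Theory.
Local Open Scope ring_scope.

(* X = bool (false = letter 0, true = letter 1); X^* = seq bool;
   X^omega = nat -> bool.  Tree automorphisms are represented by their
   action on finite words, seq bool -> seq bool. *)

Definition word := seq bool.
Definition iword := nat -> bool.

Definition pref (w : iword) (k : nat) : word := mkseq w k.
Definition in_cyl (mu : word) (w : iword) : Prop := pref w (size mu) = mu.
Definition ishift (w : iword) (k : nat) : iword := fun i => w (k + i).
Definition actw (g : word -> word) (w : iword) : iword :=
  fun k => nth false (g (pref w k.+1)) k.
Definition icat (eta : word) (w : iword) : iword :=
  fun k => if (k < size eta)%N then nth false eta k else w (k - size eta)%N.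
(* restriction g|_eps : g.(eps u) = (g.eps)(g|_eps . u) *)
Definition restr (g : word -> word) (eps : word) : word -> word :=
  fun u => drop (size eps) (g (eps ++ u)).

Definition acta (w : word) : word :=
  match w with [::] => [::] | b :: w' => (~~ b) :: w' end.

(* trace F_{2^n} -> F_2 (values 0 or 1 in L when char L = 2) *)
Definition tr (L : fieldType) (n : nat) (b : L) : L := \sum_(i < n) b ^+ (2 ^ i).

Fixpoint iota (L : fieldType) (n : nat) (alpha : L) (beta : L) (w : word)
  {struct w} : word :=
  match w with
  | [::] => [::]
  | false :: w' => false :: (if tr n beta == 1 then acta w' else w')
  | true :: w' => true :: iota n alpha (alpha * beta) w'
  end.

Inductive inG (L : fieldType) (n : nat) (alpha : L) : (word -> word) -> Prop :=
  | G_id : inG n alpha id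
  | G_a : inG n alpha acta
  | G_iota (beta : L) : inG n alpha (iota n alpha beta)
  | G_comp g h : inG n alpha g -> inG n alpha h -> inG n alpha (g \o h)
  | G_inv g h : inG n alpha g -> (forall u, h (g u) = u) ->
                 (forall u, g (h u) = u) -> inG n alpha h
  | G_ext g h : inG n alpha g -> (forall u, g u = h u) -> inG n alpha h.

(* representatives [(eta, g, mu), w] of germs *)
Record germ := Germ { g_eta : word; g_g : word -> word; g_mu : word; g_w : iword }.

Section Groupoid.
Variable Gp : (word -> word) -> Prop.

Definition is_germ (x : germ) : Prop := Gp (g_g x) /\ in_cyl (g_mu x) (g_w x).

Definition src (x : germ) : iword := g_w x.
Definition rng (x : germ) : iword :=
  icat (g_eta x) (actw (g_g x) (ishift (g_w x) (size (g_mu x)))).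

Definition germ_eq (x y : germ) : Prop :=
  (forall k, g_w x k = g_w y k) /\
  exists k, (size (g_mu x) <= k)%N /\ (size (g_mu y) <= k)%N /\
    let nu := pref (g_w x) k in
    let e1 := drop (size (g_mu x)) nu in
    let e2 := drop (size (g_mu y)) nu in
    g_eta x ++ g_g x e1 = g_eta y ++ g_g y e2 /\
    (forall u, restr (g_g x) e1 u = restr (g_g y) e2 u).

Definition gset := germ -> Prop.

Definition saturated (B : gset) : Prop :=
  (forall x, B x -> is_germ x) /\
  (forall x y, B x -> is_germ y -> germ_eq x y -> B y).

(* basic open set {[ (eta,g,mu), w ] : w in C(nu)}, mu a prefix of nu *)
Definition basic (eta : word) (g : word -> word) (mu nu : word) : gset :=
  fun y => is_germ y /\ exists w, in_cyl nu w /\ germ_eq y (Germ eta g mu w).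

Definition gopen (O : gset) : Prop :=
  saturated O /\
  forall x, O x -> exists eta g mu nu, Gp g /\ prefix mu nu /\
     basic eta g mu nu x /\ (forall y, basic eta g mu nu y -> O y).

Definition gcompact (B : gset) : Prop :=
  forall (I : Type) (O : I -> gset), (forall i, gopen (O i)) ->
    (forall x, B x -> exists i, O i x) ->
    exists s : list I, forall x, B x -> exists i, List.In i s /\ O i x.

Definition bisection (B : gset) : Prop :=
  forall x y, B x -> B y ->
    ((forall k, src x k = src y k) -> germ_eq x y) /\
    ((forall k, rng x k = rng y k) -> germ_eq x y).

Definition cob (B : gset) : Prop := gopen B /\ gcompact B /\ bisection B.

Definition inSteinberg (K : fieldType) (f : germ -> K) : Prop :=
  exists (m : nat) (c : 'I_m -> K) (B : 'I_m -> germ -> bool),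
    (forall i, cob (fun x => B i x)) /\
    (forall x, f x = \sum_(i < m) c i * (B i x)%:R).

Definition supp (K : fieldType) (f : germ -> K) : gset :=
  fun x => is_germ x /\ f x != 0.

Definition nonempty_interior (S : gset) : Prop :=
  exists O, gopen O /\ (exists x, O x) /\ (forall x, O x -> S x).

Definition singular (K : fieldType) (f : germ -> K) : Prop :=
  inSteinberg f /\ ~ nonempty_interior (supp f).

End Groupoid.

Definition z_e : germ := Germ [::] id [::] (fun _ => true).

(* Write f = sum_i c_i 1_(B_i) with compact open bisections B_i.  Near the unit z_e at 1^oo, a
   bisection B either keeps its sources away from 1^oo (compactness), or contains a basic set
   [(eta, g, 1^m), w], w in C(1^k).  On long blocks of ones g acts as some iota_n(beta), so for
   K large B contains the isotropy germ at w in C(1^K 0) applying a^b after 1^K 0 iff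
   delta && (b = Tr(alpha^(K-d) beta)), and it contains z_e iff delta && Tr(alpha^s beta) = 0
   for all s.  If f vanished on all these germs, summing over a period 2^n - 1 of alpha, along
   which Tr(alpha^s beta) = 1 for exactly 2^(n-1) values of s unless for none, would give
   2^(n-1) f(z_e) = 0, impossible in characteristic 0.  Hence f is a nonzero constant on a
   basic open set of such isotropy germs. *)

From Pilot Require Import Defs.
From mathcomp Require Import all_boot all_order all_algebra finfield.
From Stdlib Require Import Classical.
Set Implicit Arguments. Unset Strict Implicit. Unset Printing Implicit Defensive.
Import GRing.Theory.
Local Open Scope ring_scope.

Local Notation iota_n := Defs.iota.

Lemma size_pref w k : size (pref w k) = k.
Proof. exact: size_mkseq. Qed.

Lemma pref_add w a b : pref w (a + b) = pref w a ++ pref (ishift w a) b.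
Proof.
rewrite /pref /mkseq iotaD map_cat add0n; congr (_ ++ _).
by rewrite -[in iota a _](addn0 a) iotaDl -map_comp.
Qed.

Lemma pref_S w k : pref w k.+1 = pref w k ++ [:: w k].
Proof. by rewrite -addn1 pref_add /pref /mkseq /= /ishift addr0. Qed.

Lemma take_pref w a b : (a <= b)%N -> take a (pref w b) = pref w a.
Proof.
move=> hab; rewrite -(subnKC hab) pref_add.
by rewrite -{1}(size_pref w a) take_size_cat.
Qed.

Lemma eq_pref w w' k : w =1 w' -> pref w k = pref w' k.
Proof. by move=> h; apply: eq_mkseq. Qed.

Lemma pref_ones (w : iword) k : (forall i, (i < k)%N -> w i) -> pref w k = nseq k true.
Proof.
move=> hw; apply: (@eq_from_nth _ false) => [|i]; rewrite size_pref ?size_nseq // => hi.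
by rewrite nth_mkseq // nth_nseq hi hw.
Qed.

Lemma pref_true k : pref (fun=> true) k = nseq k true.
Proof. exact: pref_ones. Qed.

Lemma in_cyl_prefix mu nu w : prefix mu nu -> in_cyl nu w -> in_cyl mu w.
Proof.
move=> hp hw; have hle := size_prefix hp.
move: hp; rewrite prefixE => /eqP <-.
by rewrite /in_cyl size_takel // -[in RHS]hw take_pref.
Qed.

Lemma eqseq_cat_sizer (T : eqType) (s1 s2 s3 s4 : seq T) :
  size s3 = size s4 -> (s1 ++ s3 == s2 ++ s4) = (s1 == s2) && (s3 == s4).
Proof.
move=> h34; have [h12|h12] := eqVneq (size s1) (size s2); first exact: eqseq_cat.
apply/eqP/andP => [/(congr1 size)|[/eqP e _]]; last by rewrite e eqxx in h12.
by rewrite !size_cat h34 => /eqP; rewrite eqn_add2r (negbTE h12).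
Qed.

Definition apow (b : bool) (w : word) : word := if b then acta w else w.

Lemma size_acta w : size (acta w) = size w. Proof. by case: w. Qed.

Lemma actaK : involutive acta.
Proof. by case=> //= b w; rewrite negbK. Qed.

Lemma acta_cat u v : u != [::] -> acta (u ++ v) = acta u ++ v.
Proof. by case: u. Qed.

Lemma apow_cons b c s : apow b (c :: s) = (if b then ~~ c else c) :: s.
Proof. by case: b. Qed.

Lemma size_apow b s : size (apow b s) = size s.
Proof. by case: b; rewrite /= ?size_acta. Qed.

Lemma apow_inj s b b' : s != [::] -> apow b s = apow b' s -> b = b'.
Proof. by case: s => // c s _; rewrite !apow_cons => -[]; case: b; case: b'; case: c. Qed.

Section TraceChar2.
Variables (L : fieldType) (n : nat).
Hypothesis hchar : (2 \in [pchar L])%N.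

Lemma tr0 : tr n (0 : L) = 0.
Proof. by rewrite /tr big1 // => i _; rewrite expr0n expn_eq0. Qed.

Lemma exp2nD (x y : L) i : (x + y) ^+ (2 ^ i) = x ^+ (2 ^ i) + y ^+ (2 ^ i).
Proof. by rewrite exprDn_pchar // pnatX pnatE // hchar. Qed.

Lemma trD (x y : L) : tr n (x + y) = tr n x + tr n y.
Proof. by rewrite /tr -big_split; apply: eq_bigr => i _; rewrite exp2nD. Qed.

End TraceChar2.

Section TraceFinite.
Variables (L : finFieldType) (n : nat).
Hypotheses (hchar : (2 \in [pchar L])%N) (hcard : #|L| = (2 ^ n)%N) (hn : (0 < n)%N).

Lemma tr_sqr (x : L) : tr n x ^+ 2 = tr n x.
Proof.
have sqrD : {morph (fun z : L => z ^+ 2) : a b / a + b >-> a + b}.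
  by move=> a b; have := exp2nD hchar a b 1; rewrite expn1.
rewrite /tr (big_morph _ sqrD (expr0n _ 2)) /=.
case: n hcard hn => [//|m] hcardm _.
rewrite big_ord_recr big_ord_recl /= expn0 expr1.
rewrite -exprM -expnSr -hcardm expf_card addrC; congr (_ + _).
by apply: eq_bigr => i _; rewrite -exprM -expnSr.
Qed.

Lemma tr01 (x : L) : tr n x = 0 \/ tr n x = 1.
Proof.
have : tr n x * (tr n x - 1) = 0 by rewrite mulrBr mulr1 -expr2 tr_sqr subrr.
by move/eqP; rewrite mulf_eq0 subr_eq0 => /orP [] /eqP; [left | right].
Qed.

(* Translation by an element of trace one exchanges the two fibres of the trace. *)
Lemma card_tr1 (x1 : L) : tr n x1 = 1 -> #|[set x : L | tr n x == 1]| = (2 ^ n.-1)%N.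
Proof.
move=> hx1; set T1 := [set x : L | tr n x == 1].
have trD1 x : tr n (x + x1) = tr n x + 1 by rewrite trD // hx1.
have compl : ~: T1 = [set x + x1 | x in T1].
  apply/setP => y; rewrite !inE; apply/idP/imsetP => [hy|[x]].
    exists (y + x1); last by rewrite -addrA addrr_pchar2 // addr0.
    by rewrite inE trD1; case: (tr01 y) hy => ->; rewrite ?add0r ?eqxx.
  by rewrite inE => /eqP hx ->; rewrite trD1 hx addrr_pchar2 // eq_sym oner_eq0.
have := cardsC T1; rewrite compl card_imset; last exact: addIr.
by rewrite hcard -(prednK hn) expnS addnn -mul2n => /eqP; rewrite eqn_pmul2l // => /eqP.
Qed.

End TraceFinite.

Section Iota.
Variables (L : fieldType) (n : nat) (alpha : L).
Local Notation iota := (iota_n n alpha).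

Lemma iota_ones b j y :
  iota b (nseq j true ++ y) = nseq j true ++ iota (alpha ^+ j * b) y.
Proof. by elim: j b => [|j IH] b /=; rewrite ?expr0 ?mul1r // IH exprSr mulrA. Qed.

Lemma size_iota b u : size (iota b u) = size u.
Proof.
elim: u b => [|[] u IH] b //=; first by rewrite IH.
by case: ifP; rewrite ?size_acta.
Qed.

Lemma take_iota b u v : take (size u) (iota b (u ++ v)) = iota b u.
Proof.
elim: u b => [|[] u IH] b /=; [by rewrite take0 | by rewrite IH |].
case: ifP => _; last by rewrite take_size_cat.
by case: u {IH} => [|c u] /=; [case: v | rewrite take_size_cat].
Qed.

Lemma iota_id b : (forall s, tr n (alpha ^+ s * b) != 1) -> iota b =1 id.
Proof.
move=> htr u; elim: u b htr => [|[] u IH] b htr //=.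
  by rewrite IH // => s; rewrite mulrA -exprSr.
by have := htr 0%N; rewrite expr0 mul1r => /negbTE ->.
Qed.

Lemma restr_iota_false b s :
  restr (iota b) (false :: s) =1 restr (apow (tr n b == 1)) s.
Proof. by []. Qed.

Lemma restr_iota_nil b : restr (iota b) [::] =1 iota b.
Proof. by move=> u; rewrite /restr drop0. Qed.

Lemma iota0 : iota 0 =1 id.
Proof. by apply: iota_id => s; rewrite mulr0 tr0 eq_sym oner_eq0. Qed.

Lemma iota_idP b : iota b =1 id <-> (forall s, tr n (alpha ^+ s * b) != 1).
Proof.
split=> [hid s|]; last exact: iota_id.
have := hid (nseq s true ++ [:: false; false]).
by rewrite iota_ones /= => /eqP; rewrite eqseq_cat //= eqxx; case: ifP.
Qed.

End Iota.

Section IotaFinite.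
Variables (L : finFieldType) (n : nat) (alpha : L).
Hypotheses (hchar : (2 \in [pchar L])%N) (hcard : #|L| = (2 ^ n)%N) (hn : (0 < n)%N).
Local Notation iota := (iota_n n alpha).

Lemma iotaD b c u : iota b (iota c u) = iota (b + c) u.
Proof.
elim: u b c => [|[] u IH] b c //=; first by rewrite IH mulrDr.
rewrite trD //; case: (tr01 hchar hcard hn b) => ->; case: (tr01 hchar hcard hn c) => ->;
  by rewrite ?addr0 ?add0r ?addrr_pchar2 ?eqxx ?(eq_sym 0) ?oner_eq0 ?actaK.
Qed.

Lemma iotaK b : involutive (iota b).
Proof. by move=> u; rewrite iotaD addrr_pchar2 // iota0. Qed.

End IotaFinite.

Definition prefix_monotone (g : word -> word) :=
  forall u v, take (size u) (g (u ++ v)) = g u.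

Lemma prefix_monotone_cat g u v :
  prefix_monotone g -> g (u ++ v) = g u ++ restr g u v.
Proof. by move=> hg; rewrite /restr -{1}(cat_take_drop (size u) (g (u ++ v))) hg. Qed.

Lemma prefix_monotone_id : prefix_monotone id.
Proof. by move=> u v; rewrite take_size_cat. Qed.

Lemma prefix_monotone_apow b : prefix_monotone (apow b).
Proof.
move=> u v; case: b => /=; last by rewrite take_size_cat.
by case: u => [|c u] /=; [case: v | rewrite take_size_cat].
Qed.

Section GeneratorWords.
Variables (L : fieldType) (n : nat) (alpha : L).
Local Notation iota := (iota_n n alpha).

Definition gen_act (o : option L) : word -> word :=
  if o is Some b then iota b else acta.

Definition gens_act (s : seq (option L)) (u : word) : word := foldr gen_act u s.

Definition eventually_iota (g : word -> word) :=
  forall p, exists M q b, forall y, g (p ++ nseq M true ++ y) = q ++ iota b y.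

Lemma gens_act_cat s1 s2 u : gens_act (s1 ++ s2) u = gens_act s1 (gens_act s2 u).
Proof. exact: foldr_cat. Qed.

Lemma size_gens_act s u : size (gens_act s u) = size u.
Proof. by elim: s => //= -[b|] s IH; rewrite ?size_iota ?size_acta IH. Qed.

Lemma prefix_monotone_gen o : prefix_monotone (gen_act o).
Proof. by case: o => [b|]; [exact: take_iota | exact: (prefix_monotone_apow true)]. Qed.

Lemma prefix_monotone_gens s : prefix_monotone (gens_act s).
Proof.
elim: s => [|o s IH] u v /=; first by rewrite take_size_cat.
rewrite -{1}(cat_take_drop (size u) (gens_act s (u ++ v))) IH.
by rewrite -(size_gens_act s u) prefix_monotone_gen.
Qed.

Lemma eventually_iota_gen o : eventually_iota (gen_act o).
Proof.
case: o => [b|] p /=; last first.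
  by exists 1%N, (acta (p ++ [:: true])), 0 => y; rewrite iota0 catA acta_cat //; case: p.
elim: p b => [|[] p IH] b; first by exists 0%N, [::], b.
  by have [M [q [b' H]]] := IH (alpha * b); exists M, (true :: q), b' => y /=; rewrite H.
exists 1%N, (false :: apow (tr n b == 1) (p ++ [:: true])), 0 => y /=.
by rewrite iota0 /apow -cat_rcons -cats1; case: ifP => // _; rewrite acta_cat //; case: p {IH}.
Qed.

End GeneratorWords.

Section GroupFinite.
Variables (L : finFieldType) (n : nat) (alpha : L).
Hypotheses (hchar : (2 \in [pchar L])%N) (hcard : #|L| = (2 ^ n)%N) (hn : (0 < n)%N).
Local Notation iota := (iota_n n alpha).
Local Notation gen_act := (gen_act n alpha).
Local Notation gens_act := (gens_act n alpha).

Lemma gen_actK o : involutive (gen_act o).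
Proof. by case: o => [b|]; [exact: iotaK | exact: actaK]. Qed.

Lemma gens_act_revK s u : gens_act s (gens_act (rev s) u) = u.
Proof.
elim: s u => // o s IH u.
by rewrite rev_cons -cats1 gens_act_cat /= IH gen_actK.
Qed.

Lemma eventually_iota_gens s : eventually_iota n alpha (gens_act s).
Proof.
elim: s => [|o s IH] p; first by exists 0%N, p, 0 => y; rewrite iota0.
have [M1 [q1 [b1 H1]]] := IH p.
have [M2 [q2 [b2 H2]]] := eventually_iota_gen n alpha o q1.
exists (M1 + M2)%N, q2, (b2 + alpha ^+ M2 * b1) => y.
by rewrite nseqD -catA /= H1 iota_ones H2 iotaD.
Qed.

Lemma inG_gens_act g : inG n alpha g -> exists s, g =1 gens_act s.
Proof.
elim=> {g} [|||g h _ [s1 H1] _ [s2 H2]|g h _ [s H] hgh hhg|g h _ [s H] e].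
- by exists [::].
- by exists [:: None].
- by move=> b; exists [:: Some b].
- by exists (s1 ++ s2) => u; rewrite gens_act_cat /= H2 H1.
- exists (rev s) => u.
  by rewrite -[u in LHS](gens_act_revK s) -H hgh.
- by exists s => u; rewrite -e.
Qed.

Lemma inG_prefix_monotone g : inG n alpha g -> prefix_monotone g.
Proof.
move=> /inG_gens_act [s hs] u v.
by rewrite !hs prefix_monotone_gens.
Qed.

Lemma size_inG g u : inG n alpha g -> size (g u) = size u.
Proof. by move=> /inG_gens_act [s ->]; rewrite size_gens_act. Qed.

Lemma inG_ones_iota g : inG n alpha g ->
  exists M q b, size q = M /\ forall y, g (nseq M true ++ y) = q ++ iota b y.
Proof.
move=> hg; have [s hs] := inG_gens_act hg.
have [M [q [b hq]]] := eventually_iota_gens s [::].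
exists M, q, b; split; last by move=> y; rewrite hs hq.
have := size_inG (nseq M true) hg.
by rewrite hs -[nseq M true]cats0 hq !cats0 size_nseq.
Qed.

End GroupFinite.

Definition germ_target (x : germ) (nu : word) : word :=
  g_eta x ++ g_g x (drop (size (g_mu x)) nu).

Definition germ_restr (x : germ) (nu : word) : word -> word :=
  restr (g_g x) (drop (size (g_mu x)) nu).

Definition germ_eq_at (x y : germ) (k : nat) :=
  let nu := pref (g_w x) k in
  [/\ (size (g_mu x) <= k)%N, (size (g_mu y) <= k)%N,
      germ_target x nu = germ_target y nu & germ_restr x nu =1 germ_restr y nu].

Lemma germ_eqE x y : germ_eq x y <-> g_w x =1 g_w y /\ exists k, germ_eq_at x y k.
Proof.
split=> -[hw [k hk]]; split=> //; exists k; first by case: hk => ? [? [? ?]].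
by case: hk => ? ? ? ?.
Qed.

Lemma germ_target_cat x nu s : prefix_monotone (g_g x) -> (size (g_mu x) <= size nu)%N ->
  germ_target x (nu ++ s) = germ_target x nu ++ germ_restr x nu s.
Proof.
move=> hg hmu; rewrite /germ_target /germ_restr drop_cat.
case: ltngtP hmu => // [_|->] _; last first.
  by rewrite subnn drop0 drop_size /= -catA -prefix_monotone_cat.
by rewrite prefix_monotone_cat // catA.
Qed.

Lemma germ_restr_cat x nu s u : (size (g_mu x) <= size nu)%N ->
  germ_restr x (nu ++ s) u = drop (size s) (germ_restr x nu (s ++ u)).
Proof.
move=> hmu; rewrite /germ_restr /restr drop_cat.
case: ltngtP hmu => // [_|->] _; last by rewrite subnn drop0 drop_size /= drop_drop addnC.
by rewrite size_cat -catA drop_drop addnC.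
Qed.

Lemma germ_eq_at_ge x y k k' : prefix_monotone (g_g x) -> prefix_monotone (g_g y) ->
  germ_eq_at x y k -> (k <= k')%N -> germ_eq_at x y k'.
Proof.
move=> gx gy [hx hy ht hr] /subnKC <-; rewrite /germ_eq_at pref_add.
set nu := pref _ k; have hnu : size nu = k by rewrite size_pref.
split; rewrite ?(leq_trans _ (leq_addr _ _)) //.
  by rewrite !germ_target_cat ?hnu // ht hr.
by move=> u; rewrite !germ_restr_cat ?hnu // hr.
Qed.

Lemma germ_eq_refl x : germ_eq x x.
Proof. by apply/germ_eqE; split=> //; exists (size (g_mu x)); split. Qed.

Lemma germ_eq_sym x y : germ_eq x y -> germ_eq y x.
Proof.
move/germ_eqE=> [hw [k [hx hy ht hr]]]; apply/germ_eqE; split=> [i|]; first by rewrite hw.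
by exists k; rewrite /germ_eq_at -(eq_pref k hw); split=> // u; rewrite hr.
Qed.

Lemma germ_eq_trans x y z : prefix_monotone (g_g x) -> prefix_monotone (g_g y) ->
  prefix_monotone (g_g z) -> germ_eq x y -> germ_eq y z -> germ_eq x z.
Proof.
move=> gx gy gz /germ_eqE [hw1 [k1 e1]] /germ_eqE [hw2 [k2 e2]].
apply/germ_eqE; split=> [i|]; first by rewrite hw1 hw2.
have [a1 _ a3 a4] := germ_eq_at_ge gx gy e1 (leq_maxl k1 k2).
have [_ b2 b3 b4] := germ_eq_at_ge gy gz e2 (leq_maxr k1 k2).
exists (maxn k1 k2); move: b3 b4; rewrite -(eq_pref _ hw1) => b3 b4.
by split=> // [|u]; rewrite ?a3 ?b3 ?a4 ?b4.
Qed.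

Section GermSets.
Variable Gp : (word -> word) -> Prop.
Hypothesis Gp_monotone : forall g, Gp g -> prefix_monotone g.

Lemma basic_mem eta g mu nu w : Gp g -> prefix mu nu -> in_cyl nu w ->
  basic Gp eta g mu nu (Germ eta g mu w).
Proof.
move=> hg hp hw; split; first by split=> //; exact: in_cyl_prefix hw.
by exists w; split=> //; exact: germ_eq_refl.
Qed.

Lemma basic_open eta g mu nu : Gp g -> prefix mu nu -> gopen Gp (basic Gp eta g mu nu).
Proof.
move=> hg hp; split; last by move=> x hx; exists eta, g, mu, nu.
split=> [x [] //|y y' [hy [w [hw he]]] hy' hyy'].
split=> //; exists w; split=> //.
apply: germ_eq_trans (germ_eq_sym hyy') he; apply: Gp_monotone => //.
- exact: proj1 hy'.
- exact: proj1 hy.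
Qed.

Lemma saturated_memE (B : germ -> bool) x y : saturated Gp (fun z => B z) ->
  is_germ Gp x -> is_germ Gp y -> germ_eq x y -> B x = B y.
Proof.
move=> [_ hB] hx hy hxy; apply/idP/idP => h; first exact: hB h hy hxy.
exact: hB h hx (germ_eq_sym hxy).
Qed.

Lemma inSteinberg_germ_eq (F : fieldType) (f : germ -> F) x y : inSteinberg Gp f ->
  is_germ Gp x -> is_germ Gp y -> germ_eq x y -> f x = f y.
Proof.
move=> [m [c [B [hB hf]]]] hx hy hxy; rewrite !hf; apply: eq_bigr => i _.
by rewrite (saturated_memE (proj1 (proj1 (hB i))) hx hy hxy).
Qed.

Lemma bisection_memE (B : germ -> bool) x y :
  saturated Gp (fun z => B z) -> bisection (fun z => B z) ->
  B y -> is_germ Gp x -> src x =1 src y -> B x <-> germ_eq x y.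
Proof.
move=> hsat hbis hy hx hxy; split=> [hBx|hxyeq].
  exact: (proj1 (hbis x y hBx hy)).
by rewrite (saturated_memE hsat hx (proj1 hsat y hy) hxyeq).
Qed.

Lemma open_ones_nbhd (B : gset) x : gopen Gp B -> B x -> src x =1 (fun=> true) ->
  exists eta g m k, [/\ Gp g, (m <= k)%N &
    forall w, in_cyl (nseq k true) w -> B (Germ eta g (nseq m true) w)].
Proof.
move=> [_ hopen] hx hsrc.
have [eta [g [mu [nu [hg [hpre [[_ [w0 [hw0 /germ_eqE [hxw _]]]] hsub]]]]]]] := hopen x hx.
have hnu : nu = nseq (size nu) true.
  rewrite -[in LHS]hw0 pref_ones // => i _.
  by rewrite -[w0 i]/(g_w (Germ eta g mu w0) i) -hxw; exact: hsrc.
have hle := size_prefix hpre.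
have hmu : mu = nseq (size mu) true.
  by move: hpre; rewrite {1}hnu prefixE take_nseq // => /eqP ->.
exists eta, g, (size mu), (size nu); split=> // w hw.
by rewrite -hmu; apply: hsub; apply: basic_mem; rewrite // hnu.
Qed.

Definition src_off_ones (k : nat) : gset :=
  fun y => is_germ Gp y /\ pref (src y) k != nseq k true.

Lemma open_src_off_ones k : gopen Gp (src_off_ones k).
Proof.
split.
  split=> [x [] //|y y' [_ hy] hy' [hw _]].
  by split=> //; rewrite /src -(eq_pref _ hw).
move=> [eta g mu w] [[hg hmu] hk] /=; set N := maxn k (size mu).
have hpre : prefix mu (pref w N) by rewrite prefixE take_pref ?leq_maxr // hmu.
exists eta, g, mu, (pref w N); split=> //; split=> //; split.
  by apply: basic_mem; rewrite // /in_cyl size_pref.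
move=> y [hy [w' [hw' /germ_eqE [hw _]]]]; split=> //.
rewrite /src (eq_pref _ hw) /= -(take_pref w' (leq_maxl k (size mu))).
by move: hw'; rewrite /in_cyl size_pref => ->; rewrite take_pref ?leq_maxl.
Qed.

Lemma In_leq_foldr_maxn (i : nat) s : List.In i s -> (i <= foldr maxn 0%N s)%N.
Proof.
elim: s => //= j s IH [->|/IH h]; first exact: leq_maxl.
exact: leq_trans h (leq_maxr _ _).
Qed.

Lemma compact_off_ones (B : germ -> bool) :
  saturated Gp (fun z => B z) -> gcompact Gp (fun z => B z) ->
  ~ (exists x, B x /\ src x =1 (fun=> true)) ->
  exists K, forall x, B x -> pref (src x) K != nseq K true.
Proof.
move=> [hB _] hc hno.
have hcov x : B x -> exists k, src_off_ones k x.
  move=> hx; have [k hk] : exists k, src x k = false.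
    apply: NNPP => hfalse; apply: hno; exists x; split=> // k.
    by case E: (src x k) => //; case: hfalse; exists k.
  exists k.+1; split; first exact: hB.
  by apply: contraFneq hk => /(congr1 (nth false ^~ k)); rewrite nth_mkseq // nth_nseq ltnSn.
have [s hs] := hc nat src_off_ones open_src_off_ones hcov.
exists (foldr maxn 0%N s) => x hx; have [i [hi [_ hoff]]] := hs x hx.
have hle := In_leq_foldr_maxn hi.
by apply: contra hoff => /eqP he; rewrite -(take_pref _ hle) he take_nseq.
Qed.

End GermSets.

Definition ones0 (K : nat) : word := nseq K true ++ [:: false].

Lemma size_ones0 K : size (ones0 K) = K.+1.
Proof. by rewrite size_cat size_nseq addn1. Qed.

Lemma ones0_apowE k j A b t s : s != [::] ->
  (ones0 (k + j) ++ apow b s == A ++ ones0 j ++ apow t s) =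
  (A == nseq k true) && (b == t).
Proof.
move=> hs; rewrite /ones0 nseqD -!catA eqseq_cat_sizer; last first.
  by rewrite !size_cat !size_apow.
rewrite eq_sym !catA eqseq_cat // eqxx /=; congr (_ && _).
by apply/eqP/eqP => [/apow_inj -> //|->].
Qed.

Lemma in_cyl_ones0_pref K w k : in_cyl (ones0 K) w -> (k <= K)%N -> pref w k = nseq k true.
Proof.
move=> hw hk; rewrite -(take_pref w (leq_trans hk (leqnSn K))).
move: hw; rewrite /in_cyl size_ones0 => ->.
by rewrite takel_cat ?size_nseq // take_nseq.
Qed.

Lemma in_cyl_ones0_cat K w j :
  in_cyl (ones0 K) w -> pref w (K.+1 + j) = ones0 K ++ pref (ishift w K.+1) j.
Proof. by rewrite pref_add /in_cyl size_ones0 => ->. Qed.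

Lemma in_cyl_ones0_ltn K : in_cyl (ones0 K) (fun i => (i < K)%N).
Proof.
by rewrite /in_cyl size_ones0 pref_S ltnn pref_ones.
Qed.

(* [(1^K 0, a^b, 1^K 0), w]: the isotropy germ at w that flips the letter after 1^K 0 iff b. *)
Definition iso_germ (K : nat) (b : bool) (w : iword) : germ :=
  Germ (ones0 K) (apow b) (ones0 K) w.

Lemma restr_apow b s : s != [::] -> restr (apow b) s =1 id.
Proof. by case: s => // c s _ u; rewrite /restr cat_cons apow_cons /= drop_size_cat. Qed.

Lemma iso_germ_target K b w s :
  germ_target (iso_germ K b w) (ones0 K ++ s) = ones0 K ++ apow b s.
Proof. by rewrite /germ_target drop_size_cat. Qed.

Lemma iso_germ_restr K b w s : s != [::] ->
  germ_restr (iso_germ K b w) (ones0 K ++ s) =1 id.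
Proof. by move=> hs u; rewrite /germ_restr /= drop_size_cat // restr_apow. Qed.

Section OnesGerms.
Variables (L : finFieldType) (n : nat) (alpha : L).
Hypotheses (hn : (0 < n)%N) (hprim : (2 ^ n).-1.-primitive_root alpha).
Local Notation iota := (iota_n n alpha).
Local Notation N := (2 ^ n).-1.

Lemma period_gt0 : (0 < N)%N.
Proof. by rewrite -ltnS prednK ?expn_gt0 // -{1}(expn0 2) ltn_exp2l. Qed.

Definition orbit_traceless (b : L) := [forall s : 'I_N, tr n (alpha ^+ s * b) != 1].

Lemma orbit_tracelessP b :
  reflect (forall s, tr n (alpha ^+ s * b) != 1) (orbit_traceless b).
Proof.
apply: (iffP forallP) => h s; last exact: h.
by rewrite -(prim_expr_mod hprim) (h (Ordinal (ltn_pmod s period_gt0))).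
Qed.

Lemma orbit_traceless_mulX k b : orbit_traceless (alpha ^+ k * b) = orbit_traceless b.
Proof.
apply/orbit_tracelessP/orbit_tracelessP => h s; last by rewrite mulrA -exprD.
have := h (s + N.-1 * k)%N; rewrite mulrA -exprD -addnA -mulSnr prednK ?period_gt0 //.
by rewrite -(prim_expr_mod hprim) [(N * k)%N]mulnC addnC modnMDl (prim_expr_mod hprim).
Qed.

Section OnesGerm.
Variables (eta : word) (g : word -> word) (m M : nat) (q : word) (bt : L).
Hypotheses (g_monotone : prefix_monotone g) (size_q : size q = M)
  (g_ones : forall y, g (nseq M true ++ y) = q ++ iota bt y).

Lemma restr_ones_iota j s :
  restr g (nseq M true ++ nseq j true ++ s) =1 restr (iota (alpha ^+ j * bt)) s.
Proof.
move=> u; rewrite /restr -!catA g_ones iota_ones !size_cat !size_nseq -size_q addnC -drop_drop.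
by rewrite drop_size_cat // addnC -drop_drop (drop_size_cat _ (size_nseq j true)).
Qed.

Lemma ones_germ_target w j s :
  germ_target (Germ eta g (nseq m true) w) (nseq (m + M + j) true ++ s) =
  eta ++ q ++ nseq j true ++ iota (alpha ^+ j * bt) s.
Proof.
rewrite /germ_target /= -addnA nseqD -catA size_nseq drop_size_cat ?size_nseq //.
by rewrite nseqD -catA g_ones iota_ones.
Qed.

Lemma ones_germ_restr w j s :
  germ_restr (Germ eta g (nseq m true) w) (nseq (m + M + j) true ++ s) =1
  restr (iota (alpha ^+ j * bt)) s.
Proof.
move=> u; rewrite /germ_restr /= -addnA nseqD -catA size_nseq drop_size_cat ?size_nseq //.
by rewrite nseqD -catA restr_ones_iota.
Qed.

Lemma iso_germ_eq_ones b w j : in_cyl (ones0 (m + M + j)) w ->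
  germ_eq (iso_germ (m + M + j) b w) (Germ eta g (nseq m true) w) <->
  (eta ++ q == nseq (m + M) true) && (b == (tr n (alpha ^+ j * bt) == 1)).
Proof.
set K := (m + M + j)%N; set Y := Germ eta g (nseq m true) w => hw.
have targetY s : germ_target Y (ones0 K ++ s) =
    eta ++ q ++ ones0 j ++ apow (tr n (alpha ^+ j * bt) == 1) s.
  by rewrite /ones0 -catA ones_germ_target /= -!catA.
have restrY s : s != [::] -> germ_restr Y (ones0 K ++ s) =1 id.
  by move=> hs u; rewrite /ones0 -catA ones_germ_restr restr_iota_false restr_apow.
split.
- move/germ_eqE=> [_ [k hk]].
  have hk' : (k <= K.+1 + k.+1)%N by rewrite ltnW // ltn_addl.
  have [_ _ +] := @germ_eq_at_ge (iso_germ K b w) Y _ _ (prefix_monotone_apow b) g_monotone hk hk'.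
  rewrite /= in_cyl_ones0_cat // iso_germ_target targetY catA => /eqP.
  by rewrite ones0_apowE // -size_eq0 size_pref.
- move=> /andP [hA hb]; apply/germ_eqE; split=> //; exists (K.+1 + 1)%N.
  have hs : pref (ishift w K.+1) 1 != [::] by rewrite -size_eq0 size_pref.
  rewrite /germ_eq_at [g_w _]/= in_cyl_ones0_cat //; split.
  + by rewrite size_ones0 addn1.
  + by rewrite size_nseq (leq_trans (leq_addr (M + j) m)) // addnA addn1 -addn2 leq_addr.
  + by apply/eqP; rewrite iso_germ_target targetY catA ones0_apowE // hA hb.
  + by move=> u; rewrite iso_germ_restr // restrY.
Qed.

Lemma z_e_germ_eq_ones :
  germ_eq z_e (Germ eta g (nseq m true) (fun=> true)) <->
  (eta ++ q == nseq (m + M) true) && orbit_traceless bt.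
Proof.
set Y := Germ eta g (nseq m true) (fun=> true).
have targetY j : germ_target Y (nseq (m + M + j) true) = eta ++ q ++ nseq j true.
  by rewrite -[nseq _ true]cats0 ones_germ_target cats0.
have restrY j : germ_restr Y (nseq (m + M + j) true) =1 iota (alpha ^+ j * bt).
  by move=> u; rewrite -[nseq _ true]cats0 ones_germ_restr restr_iota_nil.
have target_z nu : germ_target z_e nu = nu by rewrite /germ_target drop0.
have restr_z nu : germ_restr z_e nu =1 id.
  by move=> u; rewrite /germ_restr /restr drop0 drop_size_cat.
split.
- move/germ_eqE=> [_ [k hk]].
  have [_ _ ht hr] :=
    @germ_eq_at_ge z_e Y _ _ prefix_monotone_id g_monotone hk (leq_addl (m + M) k).
  rewrite /= pref_true in ht hr.
  move: ht; rewrite target_z targetY nseqD catA => /eqP.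
  rewrite eq_sym eqseq_cat_sizer ?size_nseq // eqxx andbT => -> /=.
  rewrite -(orbit_traceless_mulX k); apply/orbit_tracelessP/iota_idP => u.
  by rewrite -restrY -hr restr_z.
- move=> /andP [hA /orbit_tracelessP htr]; apply/germ_eqE; split=> //; exists (m + M + 0)%N.
  rewrite /germ_eq_at /= pref_true; split.
  + by [].
  + by rewrite size_nseq -addnA leq_addr.
  + by rewrite target_z targetY cats0 (eqP hA) addn0.
  + by move=> u; rewrite restr_z restrY expr0 mul1r iota_id.
Qed.

End OnesGerm.
End OnesGerms.

Section Profiles.
Variables (L : finFieldType) (n : nat) (alpha : L).
Hypotheses (hchar : (2 \in [pchar L])%N) (hcard : #|L| = (2 ^ n)%N) (hn : (0 < n)%N)
  (hprim : (2 ^ n).-1.-primitive_root alpha).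
Local Notation G := (inG n alpha).

Record profile := Profile { prof_on : bool; prof_shift : nat; prof_coef : L }.

Definition prof_iso (p : profile) (K : nat) (b : bool) : bool :=
  prof_on p && (b == (tr n (alpha ^+ (K - prof_shift p) * prof_coef p) == 1)).

Definition prof_unit (p : profile) : bool :=
  prof_on p && orbit_traceless n alpha (prof_coef p).

Definition has_profile (B : germ -> bool) (p : profile) (K0 : nat) :=
  [/\ (prof_shift p <= K0)%N,
      forall K b w, (K0 <= K)%N -> in_cyl (ones0 K) w -> B (iso_germ K b w) = prof_iso p K b
    & B z_e = prof_unit p].

Lemma inG_apow b : G (apow b).
Proof. by case: b; [exact: G_ext (G_a _ _) _ | exact: G_ext (G_id _ _) _]. Qed.

Lemma is_germ_iso K b w : in_cyl (ones0 K) w -> is_germ G (iso_germ K b w).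
Proof. by split=> //; exact: inG_apow. Qed.

Lemma is_germ_z_e : is_germ G z_e.
Proof. by split=> //; exact: G_id. Qed.

Lemma profile_off_ones (B : germ -> bool) : cob G (fun z => B z) ->
  ~ (exists x, B x /\ src x =1 (fun=> true)) -> exists K0, has_profile B (Profile false 0 0) K0.
Proof.
move=> [[hsat _] [hcomp _]] hno.
have [K0 hK0] := compact_off_ones hsat hcomp hno.
exists K0; split=> // [K b w hK hw|]; apply/negbTE/negP => hB; have := hK0 _ hB.
  by rewrite /src /= (in_cyl_ones0_pref hw hK) eqxx.
by rewrite /src /= pref_true eqxx.
Qed.

Lemma profile_through_ones (B : germ -> bool) x : cob G (fun z => B z) ->
  B x -> src x =1 (fun=> true) -> exists p K0, has_profile B p K0.
Proof.
move=> [hopen [_ hbis]] hx hsrc; have hsat := proj1 hopen.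
have [eta [g [m [k [hg hmk hB]]]]] := open_ones_nbhd hopen hx hsrc.
have gmon := inG_prefix_monotone hchar hcard hn hg.
have [M [q [bt [hq hgq]]]] := inG_ones_iota hchar hcard hn hg.
exists (Profile (eta ++ q == nseq (m + M) true) (m + M) bt), (k + (m + M))%N.
split=> [|K b w hK hw|]; first exact: leq_addl.
- have hY : B (Germ eta g (nseq m true) w).
    by apply: hB; rewrite /in_cyl size_nseq (in_cyl_ones0_pref hw) // (leq_trans (leq_addr _ _) hK).
  have hmK : (m + M <= K)%N := leq_trans (leq_addl _ _) hK.
  move: hw; rewrite /prof_iso /= -(subnKC hmK) addKn => hw.
  have BM := bisection_memE hsat hbis hY (is_germ_iso b hw) (frefl _).
  have GC := @iso_germ_eq_ones _ _ _ eta g m M q bt gmon hq hgq b w _ hw.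
  by apply/idP/idP => [/BM/GC | /GC/BM].
- have hY : B (Germ eta g (nseq m true) (fun=> true)).
    by apply: hB; rewrite /in_cyl size_nseq pref_true.
  have BM := bisection_memE hsat hbis hY is_germ_z_e (frefl _).
  have GC := z_e_germ_eq_ones hn hprim eta m gmon hq hgq.
  by apply/idP/idP => [/BM/GC | /GC/BM].
Qed.

Lemma iso_supp_interior (F : fieldType) (f : germ -> F) K b : inSteinberg G f ->
  (forall w, in_cyl (ones0 K) w -> f (iso_germ K b w) != 0) -> nonempty_interior G (supp G f).
Proof.
move=> hf hne; exists (basic G (ones0 K) (apow b) (ones0 K) (ones0 K)); split.
  exact: (basic_open (@inG_prefix_monotone _ _ alpha hchar hcard hn) (ones0 K)
    (inG_apow b) (prefix_refl _)).
split.
  exists (iso_germ K b (fun i => (i < K)%N)).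
  exact: basic_mem _ (inG_apow b) (prefix_refl _) (in_cyl_ones0_ltn K).
move=> y [hy [w [hw hyw]]]; split=> //.
by rewrite (inSteinberg_germ_eq hf hy (is_germ_iso b hw) hyw) hne.
Qed.

Lemma cob_profile (B : germ -> bool) : cob G (fun z => B z) -> exists p K0, has_profile B p K0.
Proof.
move=> hB; have [[x [hx hsrc]]|hno] := classic (exists x, B x /\ src x =1 (fun=> true)).
  exact: profile_through_ones hB hx hsrc.
by have [K0 h] := profile_off_ones hB hno; exists (Profile false 0 0), K0.
Qed.

Lemma steinberg_profile (F : fieldType) (f : germ -> F) : inSteinberg G f ->
  exists m (c : 'I_m -> F) (p : 'I_m -> profile) K0,
  [/\ forall i, (prof_shift (p i) <= K0)%N,
      forall K b w, (K0 <= K)%N -> in_cyl (ones0 K) w ->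
        f (iso_germ K b w) = \sum_i c i * (prof_iso (p i) K b)%:R
    & f z_e = \sum_i c i * (prof_unit (p i))%:R].
Proof.
move=> [m [c [B [hB hf]]]].
have hprof i : exists pK : profile * nat, has_profile (B i) pK.1 pK.2.
  by have [p [K0 h]] := cob_profile (hB i); exists (p, K0).
have [P hP] := fin_all_exists hprof.
set K0 := (\max_(i < m) (P i).2)%N.
have hK0 i : ((P i).2 <= K0)%N := leq_bigmax (F := fun i => (P i).2) i.
exists m, c, (fun i => (P i).1), K0.
split=> [i|K b w hK hw|]; rewrite ?hf.
- by have [hs _ _] := hP i; exact: leq_trans hs (hK0 i).
- by apply: eq_bigr => i _; have [_ hiso _] := hP i; rewrite hiso // (leq_trans (hK0 i) hK).
- by apply: eq_bigr => i _; have [_ _ ->] := hP i.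
Qed.

Lemma card_orbit_tr1 e b : ~~ orbit_traceless n alpha b ->
  #|[set s : 'I_(2 ^ n).-1 | tr n (alpha ^+ (e + s) * b) == 1]| = (2 ^ n.-1)%N.
Proof.
move=> /forallPn [s0]; rewrite negbK => hs0.
have b0 : b != 0 by apply: contraTneq hs0 => ->; rewrite mulr0 tr0 eq_sym oner_eq0.
have a0 : alpha != 0.
  apply/eqP => a0; have := prim_expr_order hprim; rewrite a0 expr0n.
  by rewrite (gtn_eqF (period_gt0 hn)) => /eqP; rewrite eq_sym oner_eq0.
pose phi (s : 'I_(2 ^ n).-1) := alpha ^+ (e + s) * b.
have phi_inj : injective phi.
  move=> s s' /(mulIf b0) /eqP; rewrite !exprD (inj_eq (mulfI (expf_neq0 _ a0))).
  by rewrite (eq_prim_root_expr hprim) !modn_small ?ltn_ord // => /eqP /val_inj.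
have phi_onto : [set phi s | s : 'I_(2 ^ n).-1] = [set~ 0].
  apply/eqP; rewrite eqEcard cardsC1 hcard card_imset // card_ord leqnn andbT.
  by apply/subsetP => x /imsetP [s _ ->]; rewrite !inE mulf_eq0 negb_or expf_neq0.
rewrite -(card_imset _ phi_inj) -(card_tr1 hchar hcard hn (eqP hs0)).
apply: eq_card => x; rewrite [in RHS]inE; apply/imsetP/idP => [[s] | hx].
  by rewrite inE => hs ->.
have : x \in [set~ 0] by rewrite !inE; apply: contraTneq hx => ->; rewrite tr0 eq_sym oner_eq0.
by rewrite -phi_onto => /imsetP [s _ hs]; exists s; rewrite // inE -/(phi s) -hs.
Qed.

Lemma sum_bool (R : pzSemiRingType) (I : finType) (P : pred I) :
  \sum_(i : I) ((P i)%:R : R) = (#|[set i | P i]|)%:R.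
Proof.
rewrite -sum1dep_card natr_sum [RHS]big_mkcond /=; apply: eq_bigr => i _.
by case: (P i).
Qed.

Lemma sum_period_prof_iso (R : pzRingType) p K : (prof_shift p <= K)%N ->
  \sum_(s < (2 ^ n).-1) ((prof_iso p (K + s) true)%:R : R) =
  ((prof_on p)%:R - (prof_unit p)%:R) * (2 ^ n.-1)%:R.
Proof.
move=> hK; rewrite /prof_iso /prof_unit; case: (prof_on p) => /=; last first.
  by rewrite subrr mul0r big1.
under eq_bigr => s _ do rewrite addnC -addnBA // eq_sym eqb_id.
rewrite sum_bool; case: (boolP (orbit_traceless _ _ _)) => [/(orbit_tracelessP hn hprim) htr|htr].
  rewrite subrr mul0r (_ : [set _ | _] = set0) ?cards0 //.
  by apply/setP => s; rewrite !inE (negbTE (htr _)).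
rewrite subr0 mul1r -(card_orbit_tr1 (K - prof_shift p) htr).
by congr (_%:R); apply: eq_card => s; rewrite !inE addnC.
Qed.

(* Sum the hypothesis at b = true over one period of alpha (sum_period_prof_iso); the
   [prof_on] part cancels because the cases b = true and b = false add up to it. *)
Lemma sum_prof_unit_eq0 (F : fieldType) (hF : [pchar F] =i pred0) m
    (c : 'I_m -> F) (p : 'I_m -> profile) K0 :
  (forall i, prof_shift (p i) <= K0)%N ->
  (forall K b, (K0 <= K)%N -> \sum_i c i * (prof_iso (p i) K b)%:R = 0) ->
  \sum_i c i * (prof_unit (p i))%:R = 0.
Proof.
move=> hK0 h0.
have hon : \sum_i c i * (prof_on (p i))%:R = 0.
  rewrite (eq_bigr (fun i =>
    c i * (prof_iso (p i) K0 true)%:R + c i * (prof_iso (p i) K0 false)%:R)).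
    by rewrite big_split /= !h0 ?addr0.
  move=> i _; rewrite -mulrDr -natrD /prof_iso.
  by case: (prof_on _); case: (tr _ _ == 1).
have : \sum_(s < (2 ^ n).-1) \sum_i c i * (prof_iso (p i) (K0 + s) true)%:R = 0.
  by apply: big1 => s _; apply: h0; exact: leq_addr.
rewrite exchange_big /=.
under eq_bigr => i _ do rewrite -mulr_sumr sum_period_prof_iso // mulrA mulrBr.
rewrite -mulr_suml sumrB hon sub0r mulNr => /eqP; rewrite oppr_eq0 mulf_eq0.
by rewrite (proj1 (pcharf0P F) hF) expn_eq0 orbF => /eqP.
Qed.

End Profiles.

Theorem mainTheorem10 (K : fieldType) (hK : [pchar K] =i pred0)
  (L : finFieldType) (n : nat) (hn : (2 <= n)%N) (hL : #|L| = (2 ^ n)%N)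
  (hL2 : (2 \in [pchar L])%N) (alpha : L)
  (halpha : (2 ^ n).-1.-primitive_root alpha)
  (f : germ -> K) :
  inSteinberg (inG n alpha) f -> f z_e != 0 ->
  nonempty_interior (inG n alpha) (supp (inG n alpha) f) /\
  ~ singular (inG n alpha) f.
Proof.
move=> hSt hz; have hn0 : (0 < n)%N := ltnW hn.
have [m [c [p [K0 [hK0 f_iso f_z]]]]] := steinberg_profile hL2 hL hn0 halpha hSt.
have [K1 [b [hK1 hfK]]] : exists K1 b,
    (K0 <= K1)%N /\ \sum_i c i * (prof_iso n alpha (p i) K1 b)%:R != 0.
  apply: NNPP => hno; move: hz; rewrite f_z (sum_prof_unit_eq0 hL2 hL hn0 halpha hK hK0) ?eqxx //.
  by move=> K1 b hK1; apply/eqP/negPn/negP => hne; apply: hno; exists K1, b.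
have hint : nonempty_interior (inG n alpha) (supp (inG n alpha) f).
  by apply: (iso_supp_interior hL2 hL hn0 (K := K1) (b := b) hSt) => w hw; rewrite f_iso.
by split=> // -[_ /(_ hint)].
Qed.
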